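(* Let $\mu>0$ and let $\Omega$ be an optimal domain, with $\lambda_1,\lambda_2$ as in the optimality condition above, and set $Q=(\lambda_2/\mu,\,-\lambda_1/\mu)$ and $\lambda=\dfrac{2\mu A(\Omega)-E(\Omega)}{2\pi}$. Then on every open arc of $\partial\Omega$ where $k>0$ (strictly convex part), $k$ is smooth and $$k''(s)=-\tfrac12 k(s)^3-\lambda k(s)+\mu ,$$ and at every point $M(s)=(x(s),y(s))$ of $\partial\Omega$, $$\langle \overrightarrow{QM(s)},\mathsf{n}(s)\rangle=\frac{\lambda}{\mu}+\frac{1}{2\mu}k(s)^2,$$ where $\mathsf{n}(s)=(\sin\theta(s),-\cos\theta(s))$ is the exterior unit normal.
   Context: Let $\mathcal{C}$ be the class of bounded open convex sets $\Omega\subset\mathbb{R}^2$ whose boundary, of length $P$, is parametrized by arc length $s\mapsto(x(s),y(s))$ with $x'=\cos\theta$, $y'=\sin\theta$, $\theta\in W^{1,2}(0,P)$, $\theta'\ge0$ a.e., $\theta(P)=\theta(0)+2\pi$, $\int_0^P\cos\theta=\int_0^P\sin\theta=0$. Curvature $k=\theta'$, $E(\Omega)=\frac12\int_0^Pk^2ds$, $A$ area, $P$ perimeter, $J_\mu=E+\mu A$. An optimal domain is $\Omega\in\mathcal{C}$ with $P(\Omega)=2\pi$ minimizing $J_\mu$ among sets of $\mathcal{C}$ of perimeter $2\pi$. Optimality condition: with $x(0)=y(0)=0$ there exist reals $\lambda_1,\lambda_2,c$ with $\theta'(s)=\frac{\mu}{2}\big(\frac{\lambda_1^2+\lambda_2^2}{\mu^2}+\frac{2c}{\mu}-[x(s)-\frac{\lambda_2}{\mu}]^2-[y(s)+\frac{\lambda_1}{\mu}]^2\big)^-$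 for all $s$. *)

From Stdlib Require Import Reals List.
Import ListNotations.
Open Scope R_scope.

Definition Rint (f : R -> R) (a b v : R) : Prop :=
  exists pr : Riemann_integrable f a b, RiemannInt pr = v.

Fixpoint chain (a : R) (l : list R) (b : R) : Prop :=
  match l with
  | nil => a = b
  | t :: l' => a < t /\ chain t l' b
  end.

Fixpoint riesz_sum (f : R -> R) (t0 : R) (l : list R) : R :=
  match l with
  | nil => 0
  | t1 :: l' => (f t1 - f t0) ^ 2 / (t1 - t0) + riesz_sum f t1 l'
  end.

Definition riesz_set (f : R -> R) (a b : R) : R -> Prop :=
  fun r => exists l, chain a l b /\ r = riesz_sum f a l.

(* F. Riesz: f is in W^{1,2}(a,b) iff the Riesz sums are bounded,
   and then the supremum equals \int_a^b f'^2. *)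
Definition W12 (f : R -> R) (a b : R) : Prop := bound (riesz_set f a b).

(* E = 1/2 \int_0^P theta'^2 *)
Definition energy (theta : R -> R) (P E : R) : Prop :=
  is_lub (riesz_set theta 0 P) (2 * E).

(* Area by Green's formula: A = 1/2 \int_0^P (x y' - y x') ds. *)
Definition area (theta x y : R -> R) (P A : R) : Prop :=
  Rint (fun s => x s * sin (theta s) - y s * cos (theta s)) 0 P (2 * A).

Definition inC (P : R) (theta x y : R -> R) : Prop :=
  0 < P /\
  W12 theta 0 P /\
  (* theta' >= 0 a.e., i.e. theta nondecreasing *)
  (forall s t, 0 <= s -> s <= t -> t <= P -> theta s <= theta t) /\
  theta P = theta 0 + 2 * PI /\
  Rint (fun s => cos (theta s)) 0 P 0 /\
  Rint (fun s => sin (theta s)) 0 P 0 /\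
  (forall s, 0 <= s <= P ->
     Rint (fun t => cos (theta t)) 0 s (x s - x 0) /\
     Rint (fun t => sin (theta t)) 0 s (y s - y 0)).

Definition optimal (mu : R) (theta x y : R -> R) : Prop :=
  inC (2 * PI) theta x y /\
  forall theta' x' y', inC (2 * PI) theta' x' y' ->
    forall E A E' A',
      energy theta (2 * PI) E -> area theta x y (2 * PI) A ->
      energy theta' (2 * PI) E' -> area theta' x' y' (2 * PI) A' ->
      E + mu * A <= E' + mu * A'.

Definition negpart (r : R) : R := Rmax (- r) 0.

(* Right-hand side of the optimality condition (= theta' = k). *)
Definition kopt (mu l1 l2 c : R) (x y : R -> R) (s : R) : R :=
  mu / 2 * negpart ((l1 ^ 2 + l2 ^ 2) / mu ^ 2 + 2 * c / mu
                    - (x s - l2 / mu) ^ 2 - (y s + l1 / mu) ^ 2).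

From Coquelicot Require Import Coquelicot.
From Stdlib Require Import Reals Lra Lia List.
Import ListNotations.
Open Scope R_scope.

(* On the boundary, k = theta' is (mu/2) times the negative part of a smooth function w of
   the position M; as theta is continuous it is the primitive of k, so theta and M are C^1.
   Let tau = (cos theta, sin theta).  For the support function P = <QM, n> the chain rule
   gives P' = k <QM, tau>, and since the square of a negative part is C^1,
   (k^2)' = 2 mu k <QM, tau> even where k vanishes: hence P - k^2 / (2 mu) is constant.
   Its value comes from integrating over [0, L]: the integral of P is 2A by Green's formula
   (the integrals of cos theta and sin theta vanish), and the integral of k^2 is 2E because
   for a C^1 function the supremum of the Riesz sums is the integral of the squared
   derivative.  Where k > 0, k = -(mu/2) w is smooth with k' = mu <QM, tau> and
   k'' = mu - mu k P, which is the stated equation; iterating, every derivative of k is a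
   polynomial in k and k'. *)

Lemma is_RInt_of_Rint (f : R -> R) a b v : Rint f a b v -> is_RInt f a b v.
Proof.
  intros [pr <-]. rewrite <- (RInt_Reals f a b pr).
  exact (RInt_correct (V:=R_CompleteNormedModule) f a b (ex_RInt_Reals_1 f a b pr)).
Qed.

Lemma is_derive_eq_deriv (f : R -> R) x l l' : is_derive f x l -> l = l' -> is_derive f x l'.
Proof. now intros H <-. Qed.

Lemma continuity_pt_of_is_derive (f : R -> R) t l : is_derive f t l -> continuity_pt f t.
Proof. intro H. apply derivable_continuous_pt. exists l. now apply is_derive_Reals. Qed.

Lemma is_derive_RInt_0 (f : R -> R) : (forall t, continuity_pt f t) ->
  forall t, is_derive (fun u => RInt f 0 u) t (f t).
Proof.
  intros Hc t. apply (is_derive_RInt (V:=R_CompleteNormedModule) f _ 0).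
  - apply filter_forall. intro u. apply RInt_correct.
    apply (ex_RInt_continuous (V:=R_CompleteNormedModule)).
    intros; apply continuity_pt_filterlim, Hc.
  - apply continuity_pt_filterlim, Hc.
Qed.

Lemma eq_of_is_derive_0 (f : R -> R) a b :
  (forall t, a < t < b -> is_derive f t 0) ->
  (forall t, a <= t <= b -> continuity_pt f t) ->
  forall s, a <= s <= b -> f s = f a.
Proof.
  intros Hd Hc s Hs.
  destruct (Req_dec s a) as [->|Hne]; auto.
  destruct (MVT_gen f a s (fun _ => 0)) as [t [_ Ht]].
  - intros u Hu. rewrite Rmin_left, Rmax_right in Hu by lra. apply Hd; lra.
  - intros u Hu. rewrite Rmin_left, Rmax_right in Hu by lra. apply Hc; lra.
  - lra.
Qed.

(* Cauchy-Schwarz, from [0 <= \int (f - m)^2] with [m] the mean of [f]. *)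
Lemma is_RInt_sqr_ge (f : R -> R) a b I1 I2 : a < b -> is_RInt f a b I1 ->
  is_RInt (fun t => f t ^ 2) a b I2 -> I1 ^ 2 <= (b - a) * I2.
Proof.
  intros Hab H1 H2. set (m := I1 / (b - a)).
  assert (H := is_RInt_plus _ _ _ _ _ _
    (is_RInt_plus _ _ _ _ _ _ H2 (is_RInt_scal _ _ _ (-2 * m) _ H1))
    (is_RInt_const a b (m ^ 2))).
  apply (is_RInt_ext _ (fun t => (f t - m) ^ 2)) in H.
  2:{ intros t _. unfold plus, scal; simpl. unfold mult; simpl. ring. }
  assert (Hle := is_RInt_le _ _ _ _ _ _ (Rlt_le _ _ Hab) (is_RInt_const a b 0) H
    (fun t _ => pow2_ge_0 (f t - m))).
  unfold plus, scal, zero in Hle; simpl in Hle. unfold mult in Hle; simpl in Hle.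
  unfold m in Hle.
  replace (I2 + -2 * (I1 / (b - a)) * I1 + (b - a) * (I1 / (b - a) * (I1 / (b - a) * 1)))
    with ((I2 * (b - a) - I1 ^ 2) / (b - a)) in Hle by (field; lra).
  replace ((b - a) * 0) with 0 in Hle by ring.
  assert (0 <= I2 * (b - a) - I1 ^ 2).
  { apply Rmult_le_reg_r with (/ (b - a)). apply Rinv_0_lt_compat; lra. lra. }
  lra.
Qed.

Lemma negpart_abs r : negpart r = (Rabs r - r) / 2.
Proof. unfold negpart, Rmax. destruct Rle_dec; unfold Rabs; destruct Rcase_abs; lra. Qed.

Lemma continuity_pt_negpart r : continuity_pt negpart r.
Proof.
  apply continuity_pt_ext with (f := fun r => (Rabs r - r) / 2).
  { intro; now rewrite negpart_abs. }
  apply continuity_pt_mult.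
  - apply continuity_pt_minus. apply Rcontinuity_abs. apply continuity_pt_id.
  - apply continuity_pt_const. now intros u v.
Qed.

Lemma is_derive_negpart_neg r : r < 0 -> is_derive negpart r (-1).
Proof.
  intro Hr. apply is_derive_ext_loc with (f := fun t => - t).
  - apply (filter_imp (fun t => t < 0)).
    + intros t Ht. unfold negpart, Rmax. destruct Rle_dec; lra.
    + exact (open_lt 0 r Hr).
  - auto_derive; auto; ring.
Qed.

(* [negpart] is not differentiable at [0] but its square is [C^1]. *)
Definition negpart_sqr r := negpart r ^ 2.

Lemma is_derive_negpart_sqr r : is_derive negpart_sqr r (-2 * negpart r).
Proof.
  unfold negpart_sqr. destruct (Rtotal_order r 0) as [Hr|[->|Hr]].
  - apply is_derive_ext_loc with (f := fun t => t ^ 2).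
    + apply (filter_imp (fun t => t < 0)); [|exact (open_lt 0 r Hr)].
      intros t Ht. unfold negpart, Rmax. destruct Rle_dec; [lra|nra].
    + unfold negpart, Rmax. destruct Rle_dec; [lra|]. auto_derive; auto; ring.
  - apply is_derive_Reals. intros eps Heps. exists (mkposreal _ Heps).
    intros h Hh0 Hh. simpl in Hh.
    assert (H0 : negpart 0 = 0) by (unfold negpart, Rmax; destruct Rle_dec; lra).
    rewrite H0, Rplus_0_l.
    replace ((negpart h ^ 2 - 0 ^ 2) / h - -2 * 0) with (negpart h * (negpart h / h))
      by (field; auto).
    unfold negpart, Rmax. destruct Rle_dec.
    + replace (0 * (0 / h)) with 0 by (field; auto). now rewrite Rabs_R0.
    + now replace (- h * (- h / h)) with h by (field; auto).
  - apply is_derive_ext_loc with (f := fun t => 0).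
    + apply (filter_imp (fun t => 0 < t)); [|exact (open_gt 0 r Hr)].
      intros t Ht. unfold negpart, Rmax. destruct Rle_dec; [nra|lra].
    + unfold negpart, Rmax. destruct Rle_dec; [|lra]. auto_derive; auto; ring.
Qed.

Definition clamp (L s : R) : R := Rmax 0 (Rmin L s).

Lemma clamp_id L s : 0 <= s <= L -> clamp L s = s.
Proof. intro. unfold clamp, Rmax, Rmin. repeat destruct Rle_dec; lra. Qed.

Lemma clamp_in L s : 0 <= L -> 0 <= clamp L s <= L.
Proof. intro. unfold clamp, Rmax, Rmin. repeat destruct Rle_dec; lra. Qed.

Lemma clamp_dist_le L s t : 0 <= L -> Rabs (clamp L t - clamp L s) <= Rabs (t - s).
Proof.
  intro. unfold clamp, Rmax, Rmin.
  repeat destruct Rle_dec; unfold Rabs; repeat destruct Rcase_abs; lra.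
Qed.

Lemma riesz_term_ge0 (f : R -> R) a t : a < t -> 0 <= (f t - f a) ^ 2 / (t - a).
Proof.
  intro. apply Rmult_le_pos; [apply pow2_ge_0|]. apply Rlt_le, Rinv_0_lt_compat. lra.
Qed.

Lemma riesz_set_term (f : R -> R) L s t : 0 <= s -> s < t -> t <= L ->
  exists r, riesz_set f 0 L r /\ (f t - f s) ^ 2 / (t - s) <= r.
Proof.
  intros Hs Hst Ht.
  assert (Hl := riesz_term_ge0 f 0 s). assert (Hr := riesz_term_ge0 f t L).
  destruct (Req_dec s 0) as [->|Hs0]; destruct (Req_dec t L) as [->|HtL].
  - exists (riesz_sum f 0 [L]). split. { exists [L]; simpl; split; [lra|easy]. } simpl; lra.
  - exists (riesz_sum f 0 [t; L]). split. { exists [t; L]; simpl; repeat split; lra. }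
    simpl. specialize (Hr ltac:(lra)). lra.
  - exists (riesz_sum f 0 [s; L]). split. { exists [s; L]; simpl; repeat split; lra. }
    simpl. specialize (Hl ltac:(lra)). lra.
  - exists (riesz_sum f 0 [s; t; L]). split. { exists [s; t; L]; simpl; repeat split; lra. }
    simpl. specialize (Hl ltac:(lra)). specialize (Hr ltac:(lra)). lra.
Qed.

Lemma W12_sqr_dist_le (f : R -> R) L : W12 f 0 L ->
  exists B, 0 <= B /\ forall s t, 0 <= s <= L -> 0 <= t <= L ->
    (f t - f s) ^ 2 <= B * Rabs (t - s).
Proof.
  intros [m Hm]. exists (Rabs m). split; [apply Rabs_pos|].
  assert (Hlt : forall s t, 0 <= s -> s < t -> t <= L -> (f t - f s) ^ 2 <= Rabs m * (t - s)).
  { intros s t Hs Hst Ht. destruct (riesz_set_term f L s t Hs Hst Ht) as [r [Hr Hle]].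
    assert (Hq : (f t - f s) ^ 2 / (t - s) <= Rabs m)
      by (eapply Rle_trans; [exact Hle|]; eapply Rle_trans; [apply Hm, Hr|apply Rle_abs]).
    apply Rmult_le_reg_r with (/ (t - s)). { apply Rinv_0_lt_compat; lra. }
    replace (Rabs m * (t - s) * / (t - s)) with (Rabs m) by (field; lra). exact Hq. }
  intros s t Hs Ht. destruct (Rtotal_order s t) as [Hst|[->|Hst]].
  - rewrite (Rabs_right (t - s)) by lra. apply Hlt; lra.
  - rewrite !Rminus_diag, Rabs_R0. lra.
  - rewrite (Rabs_left (t - s)) by lra. replace ((f t - f s) ^ 2) with ((f s - f t) ^ 2) by ring.
    replace (- (t - s)) with (s - t) by ring. apply Hlt; lra.
Qed.

Lemma W12_clamp_continuous (f : R -> R) L : 0 <= L -> W12 f 0 L ->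
  forall s, continuity_pt (fun t => f (clamp L t)) s.
Proof.
  intros HL HW s eps Heps. destruct (W12_sqr_dist_le f L HW) as [B [HB Hf]].
  exists (eps ^ 2 / (B + 1)). split; [apply Rdiv_lt_0_compat; nra|].
  intros t [_ Ht]. simpl in *. unfold R_dist in *.
  assert (Hd := clamp_dist_le L s t HL).
  assert (Hd' : (B + 1) * Rabs (clamp L t - clamp L s) < eps ^ 2).
  { apply Rmult_lt_reg_r with (/ (B + 1)). { apply Rinv_0_lt_compat; lra. }
    replace ((B + 1) * Rabs (clamp L t - clamp L s) * / (B + 1))
      with (Rabs (clamp L t - clamp L s)) by (field; lra). lra. }
  assert (Hsq := Hf (clamp L s) (clamp L t) (clamp_in L s HL) (clamp_in L t HL)).
  assert (0 <= Rabs (clamp L t - clamp L s)) by apply Rabs_pos.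
  unfold Rabs at 1; destruct Rcase_abs; nra.
Qed.

Lemma chain_le a l b : chain a l b -> a <= b.
Proof.
  revert a; induction l as [|t l IH]; intros a H; simpl in H.
  - lra.
  - destruct H as [H1 H2]. specialize (IH t H2). lra.
Qed.

Lemma riesz_sum_ext (f g : R -> R) l : forall a b, chain a l b ->
  (forall s, a <= s <= b -> f s = g s) -> riesz_sum f a l = riesz_sum g a l.
Proof.
  induction l as [|t l IH]; intros a b Hc Hfg; simpl in *; auto.
  destruct Hc as [Hat Hc]. assert (Htb := chain_le _ _ _ Hc).
  rewrite (IH t b Hc) by (intros; apply Hfg; lra).
  rewrite (Hfg a), (Hfg t) by lra. reflexivity.
Qed.

Lemma is_lub_riesz_ext (f g : R -> R) a b m :
  (forall s, a <= s <= b -> f s = g s) ->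
  is_lub (riesz_set f a b) m -> is_lub (riesz_set g a b) m.
Proof.
  intros Hfg [H1 H2]. split.
  - intros r [l [Hc ->]]. apply H1. exists l. split; auto.
    symmetry; apply (riesz_sum_ext f g l a b Hc Hfg).
  - intros B HB. apply H2. intros r [l [Hc ->]]. apply HB. exists l. split; auto.
    apply (riesz_sum_ext f g l a b Hc Hfg).
Qed.

Section RieszC1.

Variables (f K : R -> R) (L : R).
Hypothesis L_gt0 : 0 < L.
Hypothesis f_K : forall t, is_derive f t (K t).
Hypothesis K_continuous : forall t, continuity_pt K t.

Lemma continuity_pt_K_sqr t : continuity_pt (fun u => K u ^ 2) t.
Proof.
  apply continuity_pt_mult; [apply K_continuous|].
  apply continuity_pt_mult; [apply K_continuous|]. apply continuity_pt_const. now intros u v.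
Qed.

Lemma ex_RInt_K_sqr a b : ex_RInt (fun u => K u ^ 2) a b.
Proof.
  apply (ex_RInt_continuous (V:=R_CompleteNormedModule)).
  intros; apply continuity_pt_filterlim, continuity_pt_K_sqr.
Qed.

Lemma is_RInt_K a b : is_RInt K a b (f b - f a).
Proof.
  apply (is_RInt_derive (V:=R_CompleteNormedModule) f K a b).
  - intros t _; apply f_K.
  - intros t _; apply continuity_pt_filterlim, K_continuous.
Qed.

Lemma riesz_sum_le_RInt l : forall a b, chain a l b ->
  riesz_sum f a l <= RInt (fun u => K u ^ 2) a b.
Proof.
  induction l as [|t l IH]; intros a b Hch; cbn [riesz_sum chain] in *.
  - subst. rewrite RInt_point. unfold zero; simpl. lra.
  - destruct Hch as [Hat Hch]. specialize (IH t b Hch).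
    rewrite <- (RInt_Chasles _ a t b) by apply ex_RInt_K_sqr.
    assert (H := is_RInt_sqr_ge K a t _ _ Hat (is_RInt_K a t)
      (RInt_correct (V:=R_CompleteNormedModule) _ _ _ (ex_RInt_K_sqr a t))).
    assert ((f t - f a) ^ 2 / (t - a) <= RInt (fun u => K u ^ 2) a t).
    { apply Rmult_le_reg_r with (t - a); [lra|].
      unfold Rdiv. rewrite Rmult_assoc, Rinv_l by lra. lra. }
    change (plus ?x ?y) with (Rplus x y). lra.
Qed.

Section UniformPartition.

Variables (eps del h : R).
Hypothesis K_sqr_uniform : forall u v, 0 <= u <= L -> 0 <= v <= L ->
  Rabs (u - v) < del -> Rabs (K u ^ 2 - K v ^ 2) < eps.
Hypothesis h_pos : 0 < h.
Hypothesis h_lt_del : h < del.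

(* Mean value theorem: the quotient equals [K c ^ 2 * h] for some [c] in the step. *)
Lemma riesz_step_ge a : 0 <= a -> a + h <= L ->
  RInt (fun u => K u ^ 2) a (a + h) - eps * h <= (f (a + h) - f a) ^ 2 / (a + h - a).
Proof.
  intros Ha Hah.
  destruct (MVT_gen f a (a + h) K) as [c [Hc ->]].
  { intros; apply f_K. }
  { intros t _. eapply continuity_pt_of_is_derive, f_K. }
  rewrite Rmin_left, Rmax_right in Hc by lra.
  replace ((K c * (a + h - a)) ^ 2 / (a + h - a)) with (K c ^ 2 * h) by (field; lra).
  assert (H : RInt (fun u => K u ^ 2) a (a + h) <= RInt (fun _ => K c ^ 2 + eps) a (a + h)).
  { apply RInt_le; [lra|apply ex_RInt_K_sqr|apply ex_RInt_const|].
    intros u Hu. assert (Hu' := K_sqr_uniform u c ltac:(lra) ltac:(lra)).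
    revert Hu'. unfold Rabs; repeat destruct Rcase_abs; lra. }
  rewrite RInt_const in H. change (scal ?x ?y) with (x * y) in H.
  replace (a + h - a) with h in H by ring. lra.
Qed.

Lemma riesz_partition_ge m a : 0 <= a -> a + INR (S m) * h <= L ->
  exists l, chain a l (a + INR (S m) * h) /\
    RInt (fun u => K u ^ 2) a (a + INR (S m) * h) - eps * (INR (S m) * h) <= riesz_sum f a l.
Proof.
  revert a. induction m as [|m IH]; intros a Ha HaL.
  - change (INR 1) with 1 in *. rewrite Rmult_1_l in *.
    exists [a + h]. cbn [chain riesz_sum]. split; [split; lra|].
    assert (Hs := riesz_step_ge a Ha HaL). lra.
  - assert (Heq : a + h + INR (S m) * h = a + INR (S (S m)) * h)
      by (rewrite (S_INR (S m)); ring).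
    assert (HSm : 0 <= INR (S m) * h) by (apply Rmult_le_pos; [apply pos_INR|lra]).
    rewrite (S_INR (S m)) in HaL.
    destruct (IH (a + h) ltac:(lra) ltac:(lra)) as [l [Hch Hsum]].
    exists ((a + h) :: l). rewrite <- Heq. split; [simpl; split; [lra|exact Hch]|].
    cbn [riesz_sum]. rewrite <- (RInt_Chasles _ a (a + h) _) by apply ex_RInt_K_sqr.
    assert (Hs := riesz_step_ge a Ha ltac:(lra)).
    change (plus ?x ?y) with (Rplus x y). rewrite (S_INR (S m)).
    replace (eps * ((INR (S m) + 1) * h)) with (eps * (INR (S m) * h) + eps * h) by ring.
    lra.
Qed.

End UniformPartition.

Lemma riesz_set_approx eps : 0 < eps ->
  exists r, riesz_set f 0 L r /\ RInt (fun u => K u ^ 2) 0 L - eps * L <= r.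
Proof.
  intro Heps.
  destruct (Heine (fun u => K u ^ 2) (fun u => 0 <= u <= L) (compact_P3 0 L)
    (fun u _ => continuity_pt_K_sqr u) (mkposreal _ Heps)) as [del Hdel].
  destruct (INR_unbounded (L / del)) as [n Hn].
  assert (HSn : 0 < INR (S n)) by (apply lt_0_INR; lia).
  set (h := L / INR (S n)).
  assert (Hh : INR (S n) * h = L) by (unfold h; field; lra).
  assert (Hdel0 := cond_pos del).
  assert (Hhdel : h < del).
  { unfold h. apply Rmult_lt_reg_r with (INR (S n)); [lra|].
    unfold Rdiv. rewrite Rmult_assoc, Rinv_l, Rmult_1_r by lra.
    apply Rmult_lt_reg_r with (/ del); [apply Rinv_0_lt_compat; lra|].
    rewrite S_INR. replace (del * (INR n + 1) * / del) with (INR n + 1) by (field; lra).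
    unfold Rdiv in Hn. lra. }
  destruct (riesz_partition_ge eps del h (fun u v Hu Hv => Hdel u v Hu Hv)
    ltac:(unfold h; apply Rdiv_lt_0_compat; lra) Hhdel n 0 ltac:(lra) ltac:(lra))
    as [l [Hch Hsum]].
  rewrite Rplus_0_l, Hh in Hch, Hsum.
  exists (riesz_sum f 0 l). split; [now exists l|lra].
Qed.

Lemma is_lub_riesz_set_RInt : is_lub (riesz_set f 0 L) (RInt (fun u => K u ^ 2) 0 L).
Proof.
  split.
  - intros r [l [Hch ->]]. now apply riesz_sum_le_RInt.
  - intros B HB. destruct (Rle_or_lt (RInt (fun u => K u ^ 2) 0 L) B) as [H|H]; auto.
    set (eps := (RInt (fun u => K u ^ 2) 0 L - B) / (2 * L)).
    destruct (riesz_set_approx eps) as [r [Hr Hle]]; [unfold eps; apply Rdiv_lt_0_compat; lra|].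
    assert (r <= B) by now apply HB.
    replace (eps * L) with ((RInt (fun u => K u ^ 2) 0 L - B) / 2) in Hle
      by (unfold eps; field; lra).
    lra.
Qed.

End RieszC1.

(* Polynomials in two variables [u, v]; [lie F p] is the derivative of [p] along the vector
   field [(u, v) |-> (v, F(u, v))]. *)
Inductive poly2 := PConst (r : R) | PU | PV | PAdd (p q : poly2) | PMul (p q : poly2).

Fixpoint poly2_eval (p : poly2) (u v : R) : R :=
  match p with
  | PConst r => r
  | PU => u
  | PV => v
  | PAdd p q => poly2_eval p u v + poly2_eval q u v
  | PMul p q => poly2_eval p u v * poly2_eval q u v
  end.

Fixpoint poly2_du (p : poly2) : poly2 :=
  match p with
  | PConst _ | PV => PConst 0
  | PU => PConst 1
  | PAdd p q => PAdd (poly2_du p) (poly2_du q)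
  | PMul p q => PAdd (PMul (poly2_du p) q) (PMul p (poly2_du q))
  end.

Fixpoint poly2_dv (p : poly2) : poly2 :=
  match p with
  | PConst _ | PU => PConst 0
  | PV => PConst 1
  | PAdd p q => PAdd (poly2_dv p) (poly2_dv q)
  | PMul p q => PAdd (PMul (poly2_dv p) q) (PMul p (poly2_dv q))
  end.

Definition lie (F p : poly2) : poly2 := PAdd (PMul (poly2_du p) PV) (PMul (poly2_dv p) F).

Fixpoint lie_iter (F : poly2) (n : nat) : poly2 :=
  match n with O => PU | S n => lie F (lie_iter F n) end.

Lemma is_derive_poly2_eval (U V : R -> R) (F : poly2) s :
  is_derive U s (V s) -> is_derive V s (poly2_eval F (U s) (V s)) ->
  forall p, is_derive (fun t => poly2_eval p (U t) (V t)) s (poly2_eval (lie F p) (U s) (V s)).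
Proof.
  intros HU HV p. induction p as [r| | |p IHp q IHq|p IHp q IHq]; cbn [poly2_eval lie].
  - eapply is_derive_eq_deriv; [apply is_derive_const|]. cbn. ring.
  - eapply is_derive_eq_deriv; [exact HU|]. cbn. ring.
  - eapply is_derive_eq_deriv; [exact HV|]. cbn. ring.
  - eapply is_derive_eq_deriv; [apply (is_derive_plus _ _ _ _ _ IHp IHq)|].
    unfold plus; cbn. ring.
  - eapply is_derive_eq_deriv; [apply (is_derive_mult _ _ _ _ _ IHp IHq)|].
    + intros; apply Rmult_comm.
    + unfold plus, mult; cbn. ring.
Qed.

Section FirstOrderCondition.

Variables (mu L : R) (theta x y : R -> R) (E A l1 l2 c : R).
Hypothesis mu_gt0 : 0 < mu.
Hypothesis theta_inC : inC L theta x y.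
Hypothesis theta_energy : energy theta L E.
Hypothesis theta_area : area theta x y L A.
Hypotheses (x0 : x 0 = 0) (y0 : y 0 = 0).
Hypothesis theta_k : forall s, 0 < s < L -> derivable_pt_lim theta s (kopt mu l1 l2 c x y s).

Let L_gt0 : 0 < L. Proof. apply theta_inC. Qed.

(* [theta] is only known on [0, L]; [thc] extends it continuously to [R]. *)
Let thc t := theta (clamp L t).

Lemma thc_continuous t : continuity_pt thc t.
Proof.
  destruct theta_inC as [_ [HW _]]. apply W12_clamp_continuous; [lra|exact HW].
Qed.

Lemma thc_eq s : 0 <= s <= L -> thc s = theta s.
Proof. intro Hs. unfold thc. now rewrite clamp_id. Qed.

Let X t := RInt (fun u => cos (thc u)) 0 t.
Let Y t := RInt (fun u => sin (thc u)) 0 t.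

Lemma is_derive_X t : is_derive X t (cos (thc t)).
Proof.
  apply (is_derive_RInt_0 (fun u => cos (thc u))). intro u.
  apply (continuity_pt_comp thc cos); [apply thc_continuous|apply continuity_cos].
Qed.

Lemma is_derive_Y t : is_derive Y t (sin (thc t)).
Proof.
  apply (is_derive_RInt_0 (fun u => sin (thc u))). intro u.
  apply (continuity_pt_comp thc sin); [apply thc_continuous|apply continuity_sin].
Qed.

Lemma X_eq s : 0 <= s <= L -> X s = x s.
Proof.
  intro Hs. destruct theta_inC as [_ [_ [_ [_ [_ [_ Hxy]]]]]].
  destruct (Hxy s Hs) as [H _]. apply is_RInt_of_Rint in H.
  apply (is_RInt_ext _ (fun u => cos (thc u))) in H.
  - unfold X. rewrite (is_RInt_unique _ _ _ _ H), x0. apply Rminus_0_r.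
  - intros u Hu. rewrite Rmin_left, Rmax_right in Hu by lra. now rewrite thc_eq by lra.
Qed.

Lemma Y_eq s : 0 <= s <= L -> Y s = y s.
Proof.
  intro Hs. destruct theta_inC as [_ [_ [_ [_ [_ [_ Hxy]]]]]].
  destruct (Hxy s Hs) as [_ H]. apply is_RInt_of_Rint in H.
  apply (is_RInt_ext _ (fun u => sin (thc u))) in H.
  - unfold Y. rewrite (is_RInt_unique _ _ _ _ H), y0. apply Rminus_0_r.
  - intros u Hu. rewrite Rmin_left, Rmax_right in Hu by lra. now rewrite thc_eq by lra.
Qed.

Let w t := (l1 ^ 2 + l2 ^ 2) / mu ^ 2 + 2 * c / mu - (X t - l2 / mu) ^ 2 - (Y t + l1 / mu) ^ 2.
Let K t := mu / 2 * negpart (w t).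

Lemma is_derive_w t :
  is_derive w t (-2 * ((X t - l2 / mu) * cos (thc t) + (Y t + l1 / mu) * sin (thc t))).
Proof.
  unfold w. auto_derive.
  - split; [eexists; apply is_derive_X|split; [eexists; apply is_derive_Y|easy]].
  - replace (Derive (fun u => X u) t) with (cos (thc t))
      by (symmetry; apply is_derive_unique, is_derive_X).
    replace (Derive (fun u => Y u) t) with (sin (thc t))
      by (symmetry; apply is_derive_unique, is_derive_Y).
    ring.
Qed.

Lemma K_continuous t : continuity_pt K t.
Proof.
  apply continuity_pt_mult; [apply continuity_pt_const; now intros u v|].
  apply (continuity_pt_comp w negpart); [|apply continuity_pt_negpart].
  eapply continuity_pt_of_is_derive, is_derive_w.
Qed.

Lemma kopt_eq_K s : 0 <= s <= L -> kopt mu l1 l2 c x y s = K s.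
Proof. intro Hs. unfold kopt, K, w. now rewrite X_eq, Y_eq. Qed.

Let Th t := theta 0 + RInt K 0 t.

Lemma is_derive_Th t : is_derive Th t (K t).
Proof.
  eapply is_derive_eq_deriv.
  - apply (is_derive_plus (fun _ => theta 0) (fun u => RInt K 0 u)).
    + apply is_derive_const.
    + apply is_derive_RInt_0, K_continuous.
  - unfold plus, zero; simpl. ring.
Qed.

Lemma is_derive_thc t : 0 < t < L -> is_derive thc t (K t).
Proof.
  intro Ht. apply (is_derive_ext_loc theta).
  - apply (filter_imp (fun u => 0 < u < L)).
    + intros u Hu. symmetry. apply thc_eq. lra.
    + exact (open_and _ _ (open_gt 0) (open_lt L) t Ht).
  - rewrite <- kopt_eq_K by lra. now apply is_derive_Reals, theta_k.
Qed.

Lemma thc_eq_Th s : 0 <= s <= L -> thc s = Th s.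
Proof.
  intro Hs.
  assert (H := eq_of_is_derive_0 (fun t => thc t - Th t) 0 L).
  enough (thc s - Th s = thc 0 - Th 0) as Heq.
  { rewrite (thc_eq 0) in Heq by lra. unfold Th in Heq |- *. rewrite RInt_point in Heq.
    unfold zero in Heq; simpl in Heq. lra. }
  apply H; [|intros t _|exact Hs].
  - intros t Ht. eapply is_derive_eq_deriv.
    + apply (is_derive_minus thc Th); [now apply is_derive_thc|apply is_derive_Th].
    + unfold minus, plus, opp; simpl. ring.
  - apply continuity_pt_minus; [apply thc_continuous|].
    eapply continuity_pt_of_is_derive, is_derive_Th.
Qed.

Lemma theta_eq_Th s : 0 <= s <= L -> theta s = Th s.
Proof. intro Hs. rewrite <- thc_eq_Th by exact Hs. now rewrite thc_eq. Qed.

Let P t := (X t - l2 / mu) * sin (Th t) + (Y t + l1 / mu) * - cos (Th t).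
Let V t := mu * ((X t - l2 / mu) * cos (Th t) + (Y t + l1 / mu) * sin (Th t)).
Let lam := (2 * mu * A - E) / L.

Lemma ex_derive_P t : ex_derive P t.
Proof.
  unfold P. auto_derive. repeat split; eexists; [apply is_derive_X|apply is_derive_Th|
    apply is_derive_Y|apply is_derive_Th].
Qed.

Lemma is_derive_P t : 0 < t < L -> is_derive P t (K t * V t / mu).
Proof.
  intro Ht. unfold P. auto_derive.
  - repeat split; eexists; [apply is_derive_X|apply is_derive_Th|
      apply is_derive_Y|apply is_derive_Th].
  - replace (Derive (fun u => X u) t) with (cos (Th t))
      by (symmetry; rewrite <- thc_eq_Th by lra; apply is_derive_unique, is_derive_X).
    replace (Derive (fun u => Y u) t) with (sin (Th t))
      by (symmetry; rewrite <- thc_eq_Th by lra; apply is_derive_unique, is_derive_Y).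
    replace (Derive (fun u => Th u) t) with (K t)
      by (symmetry; apply is_derive_unique, is_derive_Th).
    unfold V. field. lra.
Qed.

(* The chain rule through [negpart_sqr], valid also where [K] vanishes. *)
Lemma is_derive_K_sqr t : 0 < t < L -> is_derive (fun u => K u ^ 2) t (2 * K t * V t).
Proof.
  intro Ht. apply is_derive_ext with (f := fun u => (mu / 2) ^ 2 * negpart_sqr (w u)).
  { intro u. unfold K, negpart_sqr. now rewrite Rpow_mult_distr. }
  eapply is_derive_eq_deriv.
  - apply (is_derive_scal (fun u => negpart_sqr (w u))).
    apply (is_derive_comp negpart_sqr w); [apply is_derive_negpart_sqr|apply is_derive_w].
  - rewrite thc_eq_Th by lra. unfold scal; simpl; unfold mult; simpl.
    unfold K, V. field. lra.
Qed.

Lemma support_minus_K_sqr_const s : 0 <= s <= L ->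
  P s - / (2 * mu) * K s ^ 2 = P 0 - / (2 * mu) * K 0 ^ 2.
Proof.
  apply (eq_of_is_derive_0 (fun u => P u - / (2 * mu) * K u ^ 2)).
  - intros t Ht. eapply is_derive_eq_deriv.
    + apply (is_derive_minus P (fun u => / (2 * mu) * K u ^ 2)); [now apply is_derive_P|].
      apply (is_derive_scal (fun u => K u ^ 2)). now apply is_derive_K_sqr.
    + unfold minus, plus, opp, scal; simpl; unfold mult; simpl. field. lra.
  - intros t _. apply continuity_pt_minus.
    + destruct (ex_derive_P t) as [l Hl]. eapply continuity_pt_of_is_derive, Hl.
    + apply continuity_pt_mult; [apply continuity_pt_const; now intros u v|].
      now apply continuity_pt_K_sqr, K_continuous.
Qed.

Lemma is_RInt_P : is_RInt P 0 L (2 * A).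
Proof.
  destruct theta_inC as [_ [_ [_ [_ [Hcos [Hsin _]]]]]].
  apply is_RInt_of_Rint in Hcos, Hsin.
  assert (H := is_RInt_minus _ _ _ _ _ _
    (is_RInt_minus _ _ _ _ _ _ (is_RInt_of_Rint _ _ _ _ theta_area)
      (is_RInt_scal _ _ _ (l2 / mu) _ Hsin))
    (is_RInt_scal _ _ _ (l1 / mu) _ Hcos)).
  apply (is_RInt_ext _ P) in H.
  - replace (2 * A) with (minus (minus (2 * A) (scal (l2 / mu) 0)) (scal (l1 / mu) 0));
      [exact H|].
    unfold minus, plus, opp, scal; simpl; unfold mult; simpl. ring.
  - intros u Hu. rewrite Rmin_left, Rmax_right in Hu by lra.
    unfold P. rewrite X_eq, Y_eq, <- theta_eq_Th by lra.
    unfold minus, plus, opp, scal; simpl; unfold mult; simpl. ring.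
Qed.

Lemma is_RInt_K_sqr : is_RInt (fun u => K u ^ 2) 0 L (2 * E).
Proof.
  assert (Hlub := is_lub_riesz_set_RInt Th K L L_gt0 is_derive_Th K_continuous).
  apply (is_lub_riesz_ext Th theta) in Hlub.
  2:{ intros s Hs. symmetry. now apply theta_eq_Th. }
  rewrite (is_lub_u _ _ _ theta_energy Hlub).
  apply (RInt_correct (V:=R_CompleteNormedModule)), ex_RInt_K_sqr, K_continuous.
Qed.

(* Integrating the constant of [support_minus_K_sqr_const] over [0, L] identifies it. *)
Lemma support_eq s : 0 <= s <= L -> P s = lam / mu + / (2 * mu) * K s ^ 2.
Proof.
  intro Hs. set (C := P 0 - / (2 * mu) * K 0 ^ 2).
  assert (HC := is_RInt_const 0 L C).
  apply (is_RInt_ext _ (fun u => P u - / (2 * mu) * K u ^ 2)) in HC.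
  2:{ intros u Hu. rewrite Rmin_left, Rmax_right in Hu by lra.
      symmetry. apply support_minus_K_sqr_const. lra. }
  assert (HI : is_RInt (fun u => P u - / (2 * mu) * K u ^ 2) 0 L (2 * A - / (2 * mu) * (2 * E)))
    by exact (is_RInt_minus _ _ _ _ _ _ is_RInt_P
      (is_RInt_scal _ _ _ (/ (2 * mu)) _ is_RInt_K_sqr)).
  assert (Heq : L * C = 2 * A - / (2 * mu) * (2 * E)).
  { assert (H := is_RInt_unique (V:=R_CompleteNormedModule) _ _ _ _ HC).
    rewrite (is_RInt_unique (V:=R_CompleteNormedModule) _ _ _ _ HI) in H.
    rewrite H. unfold scal; simpl; unfold mult; simpl. ring. }
  assert (HCv : C = lam / mu).
  { unfold lam. apply Rmult_eq_reg_l with (mu * L); [|nra].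
    replace (mu * L * C) with (mu * (L * C)) by ring. rewrite Heq. field. lra. }
  rewrite <- HCv. unfold C. rewrite <- (support_minus_K_sqr_const s Hs). ring.
Qed.

Lemma is_derive_K t : 0 < t < L -> 0 < K t -> is_derive K t (V t).
Proof.
  intros Ht HK.
  assert (Hw : w t < 0).
  { assert (0 < negpart (w t)) by (unfold K in HK; nra).
    revert H. unfold negpart, Rmax. destruct Rle_dec; lra. }
  eapply is_derive_eq_deriv.
  - apply (is_derive_scal (fun u => negpart (w u))).
    apply (is_derive_comp negpart w); [now apply is_derive_negpart_neg|apply is_derive_w].
  - rewrite thc_eq_Th by lra. unfold scal; simpl; unfold mult; simpl.
    unfold V. field. lra.
Qed.

Lemma is_derive_V t : 0 < t < L -> is_derive V t (mu - lam * K t - / 2 * K t ^ 3).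
Proof.
  intro Ht. unfold V. auto_derive.
  - repeat split; eexists; [apply is_derive_X|apply is_derive_Th|
      apply is_derive_Y|apply is_derive_Th].
  - replace (Derive (fun u => X u) t) with (cos (Th t))
      by (symmetry; rewrite <- thc_eq_Th by lra; apply is_derive_unique, is_derive_X).
    replace (Derive (fun u => Y u) t) with (sin (Th t))
      by (symmetry; rewrite <- thc_eq_Th by lra; apply is_derive_unique, is_derive_Y).
    replace (Derive (fun u => Th u) t) with (K t)
      by (symmetry; apply is_derive_unique, is_derive_Th).
    transitivity (mu * (sin (Th t) ^ 2 + cos (Th t) ^ 2) - mu * K t * P t); [unfold P; ring|].
    rewrite <- !Rsqr_pow2, sin2_cos2, support_eq by lra. field. lra.
Qed.

Lemma support_function_identity s : 0 <= s <= L ->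
  (x s - l2 / mu) * sin (theta s) + (y s - - l1 / mu) * - cos (theta s)
  = (2 * mu * A - E) / L / mu + / (2 * mu) * kopt mu l1 l2 c x y s ^ 2.
Proof.
  intro Hs. replace (y s - - l1 / mu) with (y s + l1 / mu) by (unfold Rdiv; ring).
  rewrite <- X_eq, <- Y_eq, theta_eq_Th, kopt_eq_K by exact Hs. now apply support_eq.
Qed.

Lemma curvature_derivatives a b : 0 <= a -> a < b -> b <= L ->
  (forall s, a < s < b -> 0 < kopt mu l1 l2 c x y s) ->
  exists d : nat -> R -> R,
    (forall s, a < s < b -> d O s = kopt mu l1 l2 c x y s) /\
    (forall n s, a < s < b -> derivable_pt_lim (d n) s (d (S n) s)) /\
    (forall s, a < s < b -> d 2%nat s
       = - / 2 * kopt mu l1 l2 c x y s ^ 3 - (2 * mu * A - E) / L * kopt mu l1 l2 c x y s + mu).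
Proof.
  intros Ha Hab Hb Hk.
  set (F := PAdd (PAdd (PMul (PConst (- / 2)) (PMul PU (PMul PU PU))) (PMul (PConst (- lam)) PU))
    (PConst mu)).
  exists (fun n t => poly2_eval (lie_iter F n) (K t) (V t)). split; [|split].
  - intros s Hs. cbn. symmetry. apply kopt_eq_K. lra.
  - intros n s Hs. apply is_derive_Reals, is_derive_poly2_eval.
    + apply is_derive_K; [lra|]. rewrite <- kopt_eq_K by lra. now apply Hk.
    + eapply is_derive_eq_deriv; [apply is_derive_V; lra|]. cbn. ring.
  - intros s Hs. rewrite kopt_eq_K by lra. cbn. unfold lam. ring.
Qed.

End FirstOrderCondition.

Theorem proposition2p4 (mu : R) (theta x y : R -> R) (E A l1 l2 c : R) :
  0 < mu ->
  optimal mu theta x y ->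
  energy theta (2 * PI) E ->
  area theta x y (2 * PI) A ->
  x 0 = 0 -> y 0 = 0 ->
  (forall s, 0 < s < 2 * PI ->
     derivable_pt_lim theta s (kopt mu l1 l2 c x y s)) ->
  let k := kopt mu l1 l2 c x y in
  let lam := (2 * mu * A - E) / (2 * PI) in
  (forall a b, 0 <= a -> a < b -> b <= 2 * PI ->
     (forall s, a < s < b -> 0 < k s) ->
     exists d : nat -> R -> R,
       (forall s, a < s < b -> d O s = k s) /\
       (forall n s, a < s < b -> derivable_pt_lim (d n) s (d (S n) s)) /\
       (forall s, a < s < b ->
          d 2%nat s = - / 2 * (k s) ^ 3 - lam * k s + mu)) /\
  (forall s, 0 <= s <= 2 * PI ->
     (x s - l2 / mu) * sin (theta s) + (y s - (- l1 / mu)) * (- cos (theta s))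
     = lam / mu + / (2 * mu) * (k s) ^ 2).
Proof.
  intros Hmu [HC _] HE HA Hx0 Hy0 Hk k lam. split.
  - exact (curvature_derivatives mu (2 * PI) theta x y E A l1 l2 c Hmu HC HE HA Hx0 Hy0 Hk).
  - exact (support_function_identity mu (2 * PI) theta x y E A l1 l2 c Hmu HC HE HA Hx0 Hy0 Hk).
Qed.
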